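(* Let $d\geq 2$ and let $\mathcal K$ be the class of all compact convex subsets of $\mathbb R^d$ with positive Lebesgue measure. For every $n\geq 1$, $$\mathcal R_n(\mathcal K):=\inf_{\hat G_n}\sup_{K\in\mathcal K}\mathbb E_K\big[|K\triangle\hat G_n|\big]=+\infty,$$ where the infimum is over all set estimators $\hat G_n$ based on a sample $X_1,\ldots,X_n$.
   Context: $|\cdot|$ is Lebesgue measure, $\triangle$ symmetric difference, and $\mathbb E_K$ is expectation when $X_1,\ldots,X_n$ are i.i.d. uniform on $K$. *)

From HB Require Import structures.
From mathcomp Require Import all_boot all_order all_algebra.
From mathcomp Require Import all_classical all_reals all_analysis.
From mathcomp Require Import measurable_realfun.

Set Implicit Arguments.
Unset Strict Implicit.
Unset Printing Implicit Defensive.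

Import Order.TTheory GRing.Theory Num.Theory.
Import numFieldNormedType.Exports.

Local Open Scope classical_set_scope.
Local Open Scope ring_scope.

Definition borelType (T : topologicalType) := g_sigma_algebraType (@open T).

Section Defs.
Variable R : realType.

(* Iterated Lebesgue integration over the coordinates 0 .. k-1 of a point
   c : nat -> R (coordinate k-1 is integrated outermost). *)
Fixpoint iint (k : nat) (f : (nat -> R) -> \bar R) : \bar R :=
  match k with
  | 0 => f (fun _ => 0)
  | k'.+1 => (\int[@lebesgue_measure R]_x
                iint k' (fun c => f (fun i => if i == k' then x else c i)))%E
  end.

(* d-dimensional Lebesgue measure on R^d = 'rV[R]_d (iterated integral of
   the indicator; coincides with the product Lebesgue measure on Borel sets). *)
Definition lebd (d : nat) (A : set 'rV[R]_d) : \bar R :=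
  iint d (fun c => (\1_A (\row_(j < d) c (nat_of_ord j)))%:E).

(* Integral over the sample space (R^d)^n, a sample being the n x d matrix
   whose i-th row is X_(i+1). *)
Definition sample_int (n d : nat) (g : 'M[R]_(n, d) -> \bar R) : \bar R :=
  iint (n * d) (fun c => g (\matrix_(i < n, j < d) c (i * d + j)%N)).

(* E_K[g(X_1,...,X_n)] for X_1,...,X_n i.i.d. uniform on K. *)
Definition expect_unif (n d : nat) (K : set 'rV[R]_d)
    (g : 'M[R]_(n, d) -> \bar R) : \bar R :=
  (((fine (lebd K)) ^- n)%:E *
   sample_int (fun X => (\prod_(i < n) \1_K (row i X))%:E * g X))%E.

Definition symdiff (T : Type) (A B : set T) : set T := (A `\` B) `|` (B `\` A).

Definition Kclass (d : nat) : set (set 'rV[R]_d) :=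
  [set K : set 'rV[R]_d | [/\ compact K,
     @convex_set R 'rV[R]_d (K : set (convex_lmodType 'rV[R]_d))
     & (0 < lebd K)%E]].

(* Set estimators based on a sample of size n: maps from samples to Borel
   subsets of R^d whose loss |K /\ G(X)| is a measurable function of the
   sample for each K in the class (so that the expectation is meaningful). *)
Definition estimators (n d : nat) : set ('M[R]_(n, d) -> set 'rV[R]_d) :=
  [set G : 'M[R]_(n, d) -> set 'rV[R]_d |
     (forall X, @measurable _ (borelType 'rV[R]_d) (G X)) /\
     (forall K : set 'rV[R]_d, Kclass K ->
        @measurable_fun _ _ (borelType 'M[R]_(n, d)) (\bar R) setT
          (fun X : 'M[R]_(n, d) => lebd (symdiff K (G X))))].

Definition risk (n d : nat) (G : 'M[R]_(n, d) -> set 'rV[R]_d)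
    (K : set 'rV[R]_d) : \bar R :=
  expect_unif K (fun X => lebd (symdiff K (G X))).

Definition minimax_risk (n d : nat) : \bar R :=
  ereal_inf [set ereal_sup [set risk G K | K in @Kclass d] | G in @estimators n d].

End Defs.

From HB Require Import structures.
From mathcomp Require Import all_boot all_order all_algebra.
From mathcomp Require Import all_classical all_reals all_analysis.
From mathcomp Require Import measurable_realfun.
From mathcomp Require Import ring lra zify.

(* Le Cam's two-point argument with the nested cubes C_a = [0,a]^d and
   C_2a = [0,2a]^d.  Any set G satisfies |C_a Δ G| + |C_2a Δ G| >= |C_2a \ C_a|
   = (2^d - 1) a^d.  A sample drawn from C_a^n is admissible under both
   hypotheses, and on C_a^n the uniform densities compare as
   a^(-dn) >= (2a)^(-dn); integrating the pointwise bound over C_a^n gives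
     risk(C_a) + risk(C_2a) >= 2^(-dn) (2^d - 1) a^d,
   which is unbounded in a, so every estimator has infinite worst-case risk.
   The iterated integrals defining the expectations are identified with
   integrals against the product Lebesgue measure on R x (R x ... ), so that
   monotonicity and additivity of the integral are available. *)

Set Implicit Arguments.
Unset Strict Implicit.
Unset Printing Implicit Defensive.

Import Order.TTheory GRing.Theory Num.Theory.
Import numFieldNormedType.Exports.

Local Open Scope classical_set_scope.
Local Open Scope ring_scope.

Section sigma_finite_product.
Context d1 d2 (T1 : measurableType d1) (T2 : measurableType d2) (R : realType).
Variables (m1 : {sigma_finite_measure set T1 -> \bar R})
          (m2 : {sigma_finite_measure set T2 -> \bar R}).
Local Open Scope ereal_scope.

Lemma product_measure1_sigma_finite : sigma_finite setT (m1 \x m2).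
Proof.
have /sigma_finiteP[F [UF ndF finF]] := sigma_finiteT m1.
have /sigma_finiteP[G [UG ndG finG]] := sigma_finiteT m2.
exists (fun k => F k `*` G k).
  apply/seteqP; split => // -[x y] _.
  have [i _ Fix] : (\bigcup_k F k) x by rewrite -UF.
  have [j _ Gjy] : (\bigcup_k G k) y by rewrite -UG.
  exists (maxn i j) => //; split.
  - by move: Fix; apply/subsetPset/ndF/leq_maxl.
  - by move: Gjy; apply/subsetPset/ndG/leq_maxr.
move=> k; have [mFk Fk_fin] := finF k; have [mGk Gk_fin] := finG k.
split; first exact: measurableX.
by rewrite product_measure1E // lte_mul_pinfty // ge0_fin_numE.
Qed.

Definition sigma_finite_product : {sigma_finite_measure set (T1 * T2)%type -> \bar R} :=
  HB.pack (m1 \x m2)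
    (Measure_isSigmaFinite.Build _ _ _ (m1 \x m2) product_measure1_sigma_finite).

End sigma_finite_product.

Section lebesgue_power.
Variable R : realType.
Local Open Scope ereal_scope.

(* [Rpow k.+1 = R * Rpow k], the first component being coordinate [k], matching
   the order of integration in [iint]. *)
Fixpoint Rpow_of (k : nat) : {d : measure_display & measurableType d} :=
  match k with
  | 0 => existT _ _ (measurableTypeR R : measurableType _)
  | k.+1 => existT _ _ ((measurableTypeR R * projT2 (Rpow_of k))%type : measurableType _)
  end.

Definition Rpow k := projT2 (Rpow_of k).

Definition lebesgue1 : {sigma_finite_measure set (measurableTypeR R) -> \bar R} :=
  @lebesgue_measure R.

Fixpoint lebesgue_pow k : {sigma_finite_measure set (Rpow k) -> \bar R} :=
  match k return {sigma_finite_measure set (Rpow k) -> \bar R} with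
  | 0 => [the {sigma_finite_measure set _ -> \bar R} of
            @dirac _ (measurableTypeR R) (0%R : R) R]
  | k.+1 => sigma_finite_product lebesgue1 (lebesgue_pow k)
  end.

Fixpoint coords k : Rpow k -> nat -> R :=
  match k return Rpow k -> nat -> R with
  | 0 => fun _ _ => 0%R
  | k.+1 => fun s i => if i == k then s.1 else coords s.2 i
  end.

Lemma measurable_coords k t : measurable_fun setT (fun s : Rpow k => coords s t).
Proof.
elim: k t => [|k IH] t /=; first exact: measurable_cst.
case: (t == k); first exact: measurable_fst.
exact: measurableT_comp (IH t) measurable_snd.
Qed.

Lemma iint_ge0 k (f : (nat -> R) -> \bar R) : (forall c, 0 <= f c) -> 0 <= iint k f.
Proof.
elim: k f => [|k IH] f f0 /=; first exact: f0.
by apply: integral_ge0 => x _; apply: IH.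
Qed.

Lemma iint_lebesgue_pow k (f : (nat -> R) -> \bar R) :
  measurable_fun setT (fun s : Rpow k => f (coords s)) -> (forall c, 0 <= f c) ->
  iint k f = \int[lebesgue_pow k]_s f (coords s).
Proof.
elim: k f => [|k IH] f mf f0; first by rewrite /= integral_dirac // diracT mul1e.
rewrite /= (@fubini_tonelli1 _ _ _ _ R lebesgue1 (lebesgue_pow k)
  (fun p => f (@coords k.+1 p))) //.
apply: eq_integral => x _; apply: IH => //.
exact: measurable_fun_pair2 x mf.
Qed.

Fixpoint box k (a : R) : set (Rpow k) :=
  match k return set (Rpow k) with
  | 0 => setT
  | k.+1 => (`[0%R, a]%classic : set R) `*` @box k a
  end.

Arguments box : clear implicits.

Lemma measurable_box k a : measurable (box k a).
Proof.
elim: k => [|k IH] /=; first exact: measurableT.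
by apply: measurableX => //; exact: measurable_itv.
Qed.

Lemma lebesgue1_itv0 (a : R) : (0 <= a)%R -> lebesgue1 `[0%R, a]%classic = a%:E.
Proof.
move=> a0; apply: (etrans (lebesgue_measure_itv `[0%R, a])); rewrite /= lte_fin.
have [a_gt0|a_le0] := ltP 0%R a; first by rewrite -EFinD subr0.
by congr EFin; apply/le_anti; rewrite a_le0 a0.
Qed.

Lemma lebesgue_pow_box k a : (0 <= a)%R -> lebesgue_pow k (box k a) = (a ^+ k)%:E.
Proof.
move=> a0; elim: k => [|k IH] /=; first by rewrite diracT.
rewrite product_measure1E //; last exact: measurable_box.
by rewrite IH exprS EFinM; congr (_ * _); exact: lebesgue1_itv0.
Qed.

Lemma boxP k a s : box k a s <-> (forall t, (t < k)%N -> (0 <= coords s t <= a)%R).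
Proof.
elim: k s => [|k IH] s /=; first by split => // _ t.
case: s => x s /=; split.
  move=> [/= xa /IH sa] t; rewrite ltnS leq_eqVlt.
  by case: eqP => [_ _|_ /sa//]; rewrite in_itv in xa.
move=> H; split; first by have := H k (ltnSn k); rewrite eqxx /= in_itv.
by apply/IH => t tk; have := H t (ltnW tk); rewrite (ltn_eqF tk).
Qed.

Lemma subset_box k (a b : R) : (a <= b)%R -> box k a `<=` box k b.
Proof.
move=> ab s /boxP sa; apply/boxP => t tk.
by have /andP[-> /le_trans->] := sa t tk.
Qed.

End lebesgue_power.
Arguments box {R} k a.

Section borel_matrix.
Variable R : realType.

Definition rat_ball m p (q : 'M[rat]_(m, p)) (r : rat) : set 'M[R]_(m, p) :=
  [set y | forall i j, `|y i j - ratr (q i j)| < ratr r].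

Lemma open_bigcup_rat_ball m p (U : set 'M[R]_(m, p)) : open U ->
  U = \bigcup_(qr in [set qr | rat_ball qr.1 qr.2 `<=` U]) rat_ball qr.1 qr.2.
Proof.
move=> oU; apply/seteqP; split => [y Uy|y [qr sub b]]; last exact: sub.
have : nbhs y U by apply: open_nbhs_nbhs; split.
move=> /nbhs_ballP[e /= e0 eU].
have [r] : exists r : rat, ratr r \in `]0, e / 2[ by apply: rat_in_itvoo; rewrite divr_gt0.
rewrite in_itv /= => /andP[r0 re].
have : forall ij : 'I_m * 'I_p, exists q : rat,
    ratr q \in `](y ij.1 ij.2 - ratr r), (y ij.1 ij.2 + ratr r)[.
  by move=> ij; apply: rat_in_itvoo; rewrite ltrBlDr -addrA ltrDl addr_gt0.
case/choice => f fP.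
exists (\matrix_(i, j) f (i, j), r) => /=; last first.
  by move=> i j; have := fP (i, j); rewrite mxE in_itv /= ltr_distlC.
move=> z zb; apply: eU; split => // i j; rewrite /ball /=.
have := zb i j; rewrite mxE distrC ltr_distlC => /andP[z1 z2].
have := fP (i, j); rewrite in_itv /= => /andP[f1 f2].
rewrite ltr_distlC; apply/andP; split; lra.
Qed.

Lemma measurable_fun_borel_matrix d (T : measurableType d) m p
    (f : T -> 'M[R]_(m, p)) :
  (forall i j, measurable_fun setT (fun t => f t i j)) ->
  @measurable_fun _ _ T (borelType 'M[R]_(m, p)) setT f.
Proof.
move=> mf; apply: (@measurability _ _ T (borelType 'M[R]_(m, p)) setT f (@open _)) => //.
move=> _ [U oU <-]; rewrite setTI (open_bigcup_rat_ball oU) preimage_bigcup.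
rewrite bigcup_mkcond; apply: countable_bigcupT_measurable; first exact: countableP.
move=> [q r]; case: ifP => _ //=.
have -> : f @^-1` rat_ball q r =
    \bigcap_(ij in [set: 'I_m * 'I_p])
      (fun t => f t ij.1 ij.2) @^-1` `](ratr (q ij.1 ij.2) - ratr r),
                                       (ratr (q ij.1 ij.2) + ratr r)[%classic.
  apply/seteqP; split => [t tb ij _|t tb i j] /=; rewrite ?in_itv /=.
    by rewrite -ltr_distlC distrC; exact: tb.
  by rewrite distrC ltr_distlC; exact: (tb (i, j)).
apply: fin_bigcap_measurable => [|ij _]; first exact: finite_finset.
by rewrite -[X in measurable X]setTI; apply: mf => //; exact: measurable_itv.
Qed.

End borel_matrix.

Section lebesgue_coordinates.
Variable R : realType.
Local Open Scope ereal_scope.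

Definition coords_row d (s : Rpow R d) : 'rV[R]_d := \row_(j < d) coords s j.

Definition coords_sample n d (s : Rpow R (n * d)) : 'M[R]_(n, d) :=
  \matrix_(i < n, j < d) coords s (i * d + j)%N.

Lemma measurable_coords_row d :
  @measurable_fun _ _ (Rpow R d) (borelType 'rV[R]_d) setT (@coords_row d).
Proof.
apply: measurable_fun_borel_matrix => i j.
have -> : (fun s => coords_row s i j) = (fun s => coords s j).
  by apply/funext => s; rewrite mxE.
exact: measurable_coords.
Qed.

Lemma measurable_coords_sample n d :
  @measurable_fun _ _ (Rpow R (n * d)) (borelType 'M[R]_(n, d)) setT
    (@coords_sample n d).
Proof.
apply: measurable_fun_borel_matrix => i j.
have -> : (fun s => coords_sample s i j) = (fun s => coords s (i * d + j)%N).
  by apply/funext => s; rewrite mxE.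
exact: measurable_coords.
Qed.

Lemma measurable_preimage_coords_row d (A : set 'rV[R]_d) :
  @measurable _ (borelType 'rV[R]_d) A -> measurable (@coords_row d @^-1` A).
Proof. by move=> mA; rewrite -[X in measurable X]setTI; exact: measurable_coords_row. Qed.

Lemma lebd_ge0 d (A : set 'rV[R]_d) : 0 <= lebd A.
Proof. by apply: iint_ge0 => c; rewrite lee_fin indicE; case: (_ \in _). Qed.

Lemma lebd_lebesgue_pow d (A : set 'rV[R]_d) :
  @measurable _ (borelType 'rV[R]_d) A ->
  lebd A = lebesgue_pow R d (@coords_row d @^-1` A).
Proof.
move=> mA; have mA' := measurable_preimage_coords_row mA.
have indic_row s : \1_A (coords_row s) = \1_(@coords_row d @^-1` A) s :> R.
  by rewrite !indicE; congr (_ %:R); apply/idP/idP => /set_mem h; apply/mem_set.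
rewrite /lebd iint_lebesgue_pow; last first.
- by move=> c; rewrite lee_fin indicE; case: (_ \in _).
- apply/measurable_EFinP; rewrite (_ : (fun x => _) = \1_(@coords_row d @^-1` A)).
    exact: measurable_indic.
  by apply/funext => s; rewrite indic_row.
transitivity (\int[lebesgue_pow R d]_s (\1_(@coords_row d @^-1` A) s)%:E).
  by apply: eq_integral => s _; rewrite indic_row.
by rewrite integral_indic // setIT.
Qed.

End lebesgue_coordinates.

Section cube.
Variable R : realType.

Definition cube d (a : R) : set 'rV[R]_d :=
  [set v | forall i, (`[0, a]%classic : set R) (v ord0 i)].
Arguments cube : clear implicits.

Lemma compact_cube d a : compact (cube d a).
Proof.
by apply: (@rV_compact _ _ (fun=> `[0, a]%classic)) => _; exact: segment_compact.
Qed.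

Lemma measurable_cube d a : @measurable _ (borelType 'rV[R]_d) (cube d a).
Proof.
have closed_cube : closed (cube d a) by apply: compact_closed => //; exact: compact_cube.
rewrite -[cube d a]setCK; apply: measurableC; apply: sub_sigma_algebra.
exact: closed_openC closed_cube.
Qed.

Lemma convex_cube d a :
  @convex_set R 'rV[R]_d (cube d a : set (convex_lmodType 'rV[R]_d)).
Proof.
move=> x y l /set_mem xK /set_mem yK; apply/mem_set => i.
have := xK i; have := yK i; rewrite /= !in_itv /= => /andP[y0 ya] /andP[x0 xa].
rewrite /conv /= !mxE /unstable.onem.
have l0 : 0 <= l%:num by [].
have l1 : l%:num <= 1 by exact: le1.
apply/andP; split; nra.
Qed.

Lemma preimage_coords_row_cube d a : @coords_row R d @^-1` cube d a = box d a.
Proof.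
apply/seteqP; split => [s sa|s /boxP sa i]; last by rewrite /coords_row mxE /= in_itv sa.
by apply/boxP => t td; have := sa (Ordinal td); rewrite /coords_row mxE /= in_itv.
Qed.

Lemma lebd_cube d a : 0 <= a -> lebd (cube d a) = (a ^+ d)%:E.
Proof.
move=> a0; rewrite lebd_lebesgue_pow ?preimage_coords_row_cube ?lebesgue_pow_box //.
exact: measurable_cube.
Qed.

Lemma Kclass_cube d a : 0 < a -> Kclass (cube d a).
Proof.
move=> a0; split; [exact: compact_cube|exact: convex_cube|].
by rewrite lebd_cube ?ltW // lte_fin exprn_gt0.
Qed.

End cube.
Arguments cube : clear implicits.

Lemma two_point_coefE (F : numFieldType) (d n : nat) (a : F) : a != 0 ->
  (2 ^+ d - 1) / 2 ^+ (d * n) * a ^+ d =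
    ((2 * a) ^+ d) ^- n * (((2 * a) ^+ d - a ^+ d) * a ^+ (n * d)).
Proof.
move=> a0; rewrite exprMn [(n * d)%N]mulnC !exprM exprMn.
have : (2 ^+ d != 0 :> F) by rewrite expf_neq0 ?pnatr_eq0.
have : a ^+ d != 0 by rewrite expf_neq0.
move: (2 ^+ d) (a ^+ d) => w u u0 w0.
by field; rewrite !expf_neq0.
Qed.

Section two_point_bound.
Variable R : realType.
Local Open Scope ereal_scope.

Lemma measure_setD_le_symdiff d (T : measurableType d)
    (mu : {measure set T -> \bar R}) (A B G : set T) :
  measurable A -> measurable B -> measurable G ->
  mu (B `\` A) <= mu (symdiff A G) + mu (symdiff B G).
Proof.
move=> mA mB mG.
have mS X : measurable X -> measurable (symdiff X G).
  by move=> mX; apply: measurableU; apply: measurableD.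
apply: le_trans (measureU2 _ (mS _ mA) (mS _ mB)).
apply: le_measure; rewrite ?inE; [exact: measurableD|exact: measurableU (mS _ mA) (mS _ mB)|].
by move=> x [Bx nAx]; have [Gx|nGx] := pselect (G x); [left; right|right; left].
Qed.

Lemma lebd_symdiff_cubes d (a : R) (A : set 'rV[R]_d) :
  @measurable _ (borelType 'rV[R]_d) A -> (0 < a)%R ->
  (((2 * a) ^+ d - a ^+ d)%R)%:E <=
    lebd (symdiff (cube R d a) A) + lebd (symdiff (cube R d (2 * a)) A).
Proof.
move=> mA a0; have a2a : (a <= 2 * a)%R by lra.
have mS b : @measurable _ (borelType 'rV[R]_d) (symdiff (cube R d b) A).
  by apply: measurableU; apply: measurableD => //; exact: measurable_cube.
have mA' := measurable_preimage_coords_row mA.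
rewrite !lebd_lebesgue_pow //.
have preimage_symdiff K : @coords_row R d @^-1` symdiff K A =
    symdiff (@coords_row R d @^-1` K) (@coords_row R d @^-1` A) by [].
rewrite !preimage_symdiff !preimage_coords_row_cube.
have -> : (((2 * a) ^+ d - a ^+ d)%R)%:E = lebesgue_pow R d (box d (2 * a) `\` box d a).
  have a2_ge0 : (0 <= 2 * a)%R by lra.
  rewrite measureD; try exact: measurable_box.
    rewrite setIidr; last exact: subset_box.
    transitivity (((2 * a) ^+ d)%:E - (a ^+ d)%:E); first by rewrite EFinB.
    by congr (_ - _); apply/esym; apply: lebesgue_pow_box => //; exact: ltW.
  apply: le_lt_trans (ltry ((2 * a) ^+ d)); rewrite le_eqVlt; apply/orP; left.
  by apply/eqP; apply: lebesgue_pow_box.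
exact: measure_setD_le_symdiff (measurable_box _ _) (measurable_box _ _) mA'.
Qed.

Lemma box_sample_rowsP n d (a : R) (s : Rpow R (n * d)) : (0 < d)%N ->
  box (n * d) a s <-> forall i, cube R d a (row i (coords_sample s)).
Proof.
move=> d0; split => [/boxP sa i j|rows].
  by rewrite !mxE /= in_itv /=; apply: sa; have := ltn_ord i; have := ltn_ord j; nia.
apply/boxP => t tn; have tdn : (t %/ d < n)%N by rewrite ltn_divLR.
have := rows (Ordinal tdn) (Ordinal (ltn_pmod t d0)).
by rewrite !mxE /= in_itv /= -divn_eq.
Qed.

Lemma prod_indic_cube n d (a : R) (s : Rpow R (n * d)) : (0 < d)%N ->
  (\prod_(i < n) \1_(cube R d a) (row i (coords_sample s)) = \1_(box (n * d) a) s :> R)%R.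
Proof.
move=> d0; have [sa|sa] := pselect (box (n * d) a s).
  rewrite indicE mem_set // big1 // => i _; rewrite indicE mem_set //.
  by move: i; apply/box_sample_rowsP.
rewrite indicE memNset //.
have [i nrow] : exists i, ~ cube R d a (row i (coords_sample s)).
  apply: contrapT => rows; apply/sa/box_sample_rowsP => // i.
  by apply: contrapT => ?; apply: rows; exists i.
by rewrite (bigD1 i) //= indicE memNset // mul0r.
Qed.

Definition cube_loss n d (G : 'M[R]_(n, d) -> set 'rV[R]_d) (b : R)
    (s : Rpow R (n * d)) : \bar R :=
  lebd (symdiff (cube R d b) (G (coords_sample s))).

Lemma measurable_cube_loss n d (G : 'M[R]_(n, d) -> set 'rV[R]_d) (b : R) :
  estimators G -> (0 < b)%R -> measurable_fun setT (cube_loss G b).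
Proof.
move=> [_ mG] b0.
exact: measurableT_comp (mG _ (Kclass_cube d b0)) (@measurable_coords_sample R n d).
Qed.

Lemma risk_cube n d (G : 'M[R]_(n, d) -> set 'rV[R]_d) (a : R) :
  estimators G -> (0 < a)%R -> (0 < d)%N ->
  risk G (cube R d a) =
    ((a ^+ d) ^- n)%:E * \int[lebesgue_pow R (n * d)]_(s in box (n * d) a) cube_loss G a s.
Proof.
move=> hG a0 d0; rewrite /risk /expect_unif lebd_cube ?ltW //=; congr (_ * _).
have mbox : measurable_fun setT (fun s => (\1_(box (n * d) a) s : R)%:E).
  by apply/measurable_EFinP; apply: measurable_indic; exact: measurable_box.
rewrite /sample_int iint_lebesgue_pow.
- rewrite [in RHS]integral_mkcond epatch_indic; apply: eq_integral => s _ /=.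
  by rewrite prod_indic_cube // muleC.
- apply: eq_measurable_fun (emeasurable_funM mbox (measurable_cube_loss hG a0)).
  by move=> s _ /=; rewrite prod_indic_cube.
- move=> c; apply: mule_ge0; last exact: lebd_ge0.
  by rewrite lee_fin; apply: prodr_ge0 => i _; rewrite indicE; case: (_ \in _).
Qed.

Lemma cube_losses_ge n d (G : 'M[R]_(n, d) -> set 'rV[R]_d) (a : R) :
  estimators G -> (0 < a)%R ->
  ((((2 * a) ^+ d - a ^+ d) * a ^+ (n * d))%R)%:E <=
    \int[lebesgue_pow R (n * d)]_(s in box (n * d) a) cube_loss G a s +
    \int[lebesgue_pow R (n * d)]_(s in box (n * d) a) cube_loss G (2 * a)%R s.
Proof.
move=> hG a0; have a2_gt0 : (0 < 2 * a)%R by lra.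
have mbox := measurable_box (n * d) a.
have mloss b : (0 < b)%R -> measurable_fun (box (n * d) a) (cube_loss G b).
  by move=> b0; exact: measurable_funS (measurable_cube_loss hG b0).
rewrite -ge0_integralD //; [|by move=> *; exact: lebd_ge0|exact: mloss
                            |by move=> *; exact: lebd_ge0|exact: mloss].
rewrite EFinM -[X in _ * X](lebesgue_pow_box (n * d) (ltW a0)) -integral_cst //.
apply: ge0_le_integral => //.
- by move=> s _; rewrite lee_fin subr_ge0 lerXn2r ?nnegrE; lra.
- by apply: emeasurable_funD; exact: mloss.
- by move=> s _; apply: lebd_symdiff_cubes => //; exact: hG.1.
Qed.

Lemma risk_cubes_ge n d (G : 'M[R]_(n, d) -> set 'rV[R]_d) (a : R) :
  estimators G -> (0 < a)%R -> (0 < d)%N ->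
  (((2 ^+ d - 1) / 2 ^+ (d * n) * a ^+ d)%R)%:E <=
    risk G (cube R d a) + risk G (cube R d (2 * a)).
Proof.
move=> hG a0 d0; have a2_gt0 : (0 < 2 * a)%R by lra.
rewrite !risk_cube // two_point_coefE ?gt_eqF // EFinM.
have int_ge0 b B : 0 <= \int[lebesgue_pow R (n * d)]_(s in box (n * d) B) cube_loss G b s.
  by apply: integral_ge0 => s _; exact: lebd_ge0.
have V2n_ge0 : 0%:E <= ((((2 * a) ^+ d) ^- n)%R)%:E.
  by rewrite lee_fin invr_ge0 !exprn_ge0 // ltW.
apply: le_trans (lee_wpmul2l V2n_ge0 (cube_losses_ge hG a0)) _.
rewrite ge0_muleDr //; apply: leeD.
- have V_le : (a ^+ d <= (2 * a) ^+ d)%R by rewrite lerXn2r ?nnegrE; lra.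
  apply: lee_wpmul2r => //; rewrite lee_fin lef_pV2 ?posrE ?exprn_gt0 //.
  by rewrite lerXn2r ?nnegrE ?exprn_ge0 // ltW.
- apply: lee_wpmul2l => //; apply: ge0_subset_integral; try exact: measurable_box.
  + exact: measurable_funS (measurable_cube_loss hG a2_gt0).
  + by move=> s _; exact: lebd_ge0.
  + by apply: subset_box; lra.
Qed.

Lemma risk_unbounded n d (G : 'M[R]_(n, d) -> set 'rV[R]_d) (M : R) :
  estimators G -> (0 < d)%N -> exists2 K, Kclass K & M%:E <= risk G K.
Proof.
move=> hG d0; set c := ((2 ^+ d - 1) / 2 ^+ (d * n) : R)%R.
have c_gt0 : (0 < c)%R.
  have : (2 <= 2 ^+ d :> R)%R by apply: ler_eXnr; rewrite ?ler1n.
  by move=> ?; rewrite divr_gt0 ?exprn_gt0 //; lra.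
set a := Num.max 1%R (2 * M / c)%R.
have a_ge1 : (1 <= a)%R by rewrite le_max lexx.
have a_gt0 : (0 < a)%R by lra.
have ca : (2 * M <= c * a ^+ d)%R.
  have : (a <= a ^+ d)%R by exact: ler_eXnr.
  have : (2 * M / c <= a)%R by rewrite le_max lexx orbT.
  rewrite ler_pdivrMr //; nra.
have := risk_cubes_ge hG a_gt0 d0.
have [r1|r1] := leP M%:E (risk G (cube R d a)).
  by exists (cube R d a) => //; exact: Kclass_cube.
have [r2|r2] := leP M%:E (risk G (cube R d (2 * a))).
  by exists (cube R d (2 * a)) => //; apply: Kclass_cube; lra.
move=> /le_lt_trans /(_ (lteD r1 r2)); rewrite -EFinD lte_fin -/c; lra.
Qed.

End two_point_bound.

Theorem theorem3 (R : realType) (d n : nat) :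
  (2 <= d)%N -> (1 <= n)%N -> minimax_risk R n d = +oo%E.
Proof.
move=> d2 _; apply/ereal_inf_pinfty => _ [G hG <-].
have risk_sup_ge (M : R) : (M%:E <= ereal_sup [set risk G K | K in @Kclass R d])%E.
  have [K KK MK] := risk_unbounded M hG (ltnW d2).
  by apply: le_trans MK _; apply: ereal_sup_ubound; exists K.
case E : (ereal_sup _) => [r| |] //.
  by have := risk_sup_ge (r + 1)%R; rewrite E lee_fin gerDl ler10.
by have := risk_sup_ge 0%R; rewrite E leeNy_eq.
Qed.
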